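(* In the setting described in the context, let $\hat u_0=\min\{x\in[v,z_0]: f^2(x)=d\}$, for $n\ge1$ let $\hat\mu'_{m,n}=\max\{x\in[v,\hat u_0]: f^{m+2n}(x)=d\}$, and for $n,k\ge1$ let $\hat\mu_{m,n,k}=\min\{x\in[\hat\mu'_{m,n},\hat\mu'_{m,n+1}]: f^{m+2n+2k}(x)=d\}$ (these sets are nonempty). Then for each $n\ge1$ and $k\ge1$, every periodic point of $f$ in $[\hat\mu'_{m,n},\hat\mu_{m,n,k}]$ whose least period is odd has least period $\ge m+2n+2k$.
   Context: Let $I$ be a compact interval and $f:I\to I$ continuous; $f^1=f$, $f^n=f\circ f^{n-1}$. A point $x_0$ is a periodic point of least period $k$ (a period-$k$ point) if $f^k(x_0)=x_0$ and $f^i(x_0)\ne x_0$ for $0<i<k$. Let $m\ge3$ be odd and let $P$ be a periodic orbit of $f$ of least period $m$. Put $e=f^{m-1}(\min P)$. Let $v\in[\min P,e)$ be a point with $f(v)=e$, and let $z\in(v,e)$ be a fixed point of $f$ (such points exist). Define $z_0=\min\{x\in[v,z]: f^2(x)=x\}$ and $d=\max\{x\in[\min P,v]: f^2(x)=z_0\}$ (both sets are nonempty). *)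

From Stdlib Require Import Reals Lra Lia Arith.
Open Scope R_scope.

Definition iter (n : nat) (f : R -> R) (x : R) : R := Nat.iter n f x.

Definition cont_on (a b : R) (f : R -> R) : Prop :=
  forall x, a <= x <= b -> forall eps, 0 < eps ->
    exists delta, 0 < delta /\
      forall y, a <= y <= b -> Rabs (y - x) < delta -> Rabs (f y - f x) < eps.

Definition maps_into (a b : R) (f : R -> R) : Prop :=
  forall x, a <= x <= b -> a <= f x <= b.

Definition least_period (f : R -> R) (k : nat) (x : R) : Prop :=
  (0 < k)%nat /\ iter k f x = x /\ forall i, (0 < i < k)%nat -> iter i f x <> x.

Definition is_min_of (S : R -> Prop) (x : R) : Prop :=
  S x /\ forall y, S y -> x <= y.

Definition is_max_of (S : R -> Prop) (x : R) : Prop :=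
  S x /\ forall y, S y -> y <= x.

From Stdlib Require Import Reals Lra Lia Arith.
Open Scope R_scope.

(* Write g = f^2.  Below the least fixed point z0 of g to the right of v we
   have g < id, and the f-orbit {z0, f z0} of z0 stays in [z0, +oo).  Since
   g d = z0, a periodic point of [v, u0] never reaches d: its orbit would
   contain z0, hence lie above u0.  On the other hand g maps both [d, v] and
   [u0, z0] over themselves, so d has g^j-preimages in both intervals for every
   j, and the f^q-image of mu'_n (for q >= m + 2n) or of u0 (for q < m + 2n,
   q odd) lies outside (d, z0).  If y in [mu'_n, mu_{n,k}] had an odd period
   q < m + 2n + 2k, the intermediate value theorem for f^q between y and that
   endpoint would give a point x reaching d at time m + 2n + 2k, resp. m + 2n,
   strictly closer to y than the extremality of mu_{n,k}, resp. mu'_n, allows;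
   so x = y and y reaches d, which is impossible. *)

Definition between (c x y : R) : Prop := x <= c <= y \/ y <= c <= x.

Lemma iter_add n k f x : iter (n + k) f x = iter n f (iter k f x).
Proof. apply Nat.iter_add. Qed.

Lemma iter_mul p n f x : iter (p * n) f x = iter n (iter p f) x.
Proof.
  revert x; induction n as [|n IHn]; intros x; [rewrite Nat.mul_0_r; reflexivity|].
  rewrite Nat.mul_succ_r, iter_add, IHn. unfold iter. now rewrite Nat.iter_succ_r.
Qed.

Lemma iter_mul_fixed q k f x : iter q f x = x -> iter (k * q) f x = x.
Proof.
  intros Hx. induction k as [|k IHk]; [reflexivity|].
  rewrite Nat.mul_succ_l, iter_add, Hx. exact IHk.
Qed.

Lemma iter_periodic_return q M f x :
  (0 < q)%nat -> iter q f x = x -> iter (M * q - M) f (iter M f x) = x.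
Proof.
  intros Hq Hx. rewrite <- iter_add, Nat.sub_add by nia. now apply iter_mul_fixed.
Qed.

Section IntermediateValues.

Variables (a b : R) (h : R -> R).
Hypothesis cont_h : cont_on a b h.

Lemma cont_on_sub_id : cont_on a b (fun x => h x - x).
Proof.
  intros x Hx eps Heps.
  destruct (cont_h x Hx (eps / 2) ltac:(lra)) as [del [Hdel Hd]].
  exists (Rmin del (eps / 2)); split; [now apply Rmin_pos; lra|].
  intros y Hy Hxy. pose proof (Rmin_l del (eps / 2)). pose proof (Rmin_r del (eps / 2)).
  specialize (Hd y Hy ltac:(lra)). revert Hd; split_Rabs; lra.
Qed.

(* Composing with the retraction of R onto [x1, x2] turns continuity on the
   interval into continuity on R, where the Stdlib IVT applies. *)
Lemma continuity_retract x1 x2 :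
  a <= x1 <= x2 -> x2 <= b -> continuity (fun x => h (Rmax x1 (Rmin x2 x))).
Proof.
  intros H1 H2 x0 eps Heps.
  assert (Hr : forall x, x1 <= Rmax x1 (Rmin x2 x) <= x2).
  { intros x. unfold Rmax, Rmin. repeat destruct Rle_dec; lra. }
  assert (Hlip : forall x, Rabs (Rmax x1 (Rmin x2 x) - Rmax x1 (Rmin x2 x0)) <= Rabs (x - x0)).
  { intros x. unfold Rmax, Rmin. repeat destruct Rle_dec; split_Rabs; lra. }
  pose proof (Hr x0).
  destruct (cont_h (Rmax x1 (Rmin x2 x0)) ltac:(lra) eps Heps) as [del [Hdel Hd]].
  exists del; split; [lra|]. intros x [_ Hx]. simpl in *. unfold R_dist in *.
  pose proof (Hr x). pose proof (Hlip x). apply Hd; lra.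
Qed.

Lemma cont_on_ivt x1 x2 c :
  a <= x1 <= x2 -> x2 <= b -> between c (h x1) (h x2) ->
  exists t, x1 <= t <= x2 /\ h t = c.
Proof.
  intros H1 H2 Hc.
  assert (Hid : forall x, x1 <= x <= x2 -> Rmax x1 (Rmin x2 x) = x).
  { intros x Hx. unfold Rmax, Rmin. repeat destruct Rle_dec; lra. }
  destruct (IVT_cor (fun x => h (Rmax x1 (Rmin x2 x)) - c) x1 x2) as [t [Ht Ht0]].
  - apply continuity_minus; [now apply continuity_retract|apply continuity_const; now intros ? ?].
  - lra.
  - rewrite !Hid by lra. destruct Hc; nra.
  - exists t. rewrite Hid in Ht0 by lra. split; [exact Ht|lra].
Qed.

Lemma cont_on_ivt_between x1 x2 c :
  a <= x1 <= b -> a <= x2 <= b -> between c (h x1) (h x2) ->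
  exists t, between t x1 x2 /\ h t = c.
Proof.
  intros H1 H2 Hc. destruct (Rle_dec x1 x2).
  - destruct (cont_on_ivt x1 x2 c) as [t [Ht Htc]]; [lra|lra|exact Hc|].
    exists t; split; [left|]; assumption.
  - destruct (cont_on_ivt x2 x1 c) as [t [Ht Htc]]; [lra|lra|unfold between in *; tauto|].
    exists t; split; [right|]; assumption.
Qed.

Lemma cont_on_cover x1 x2 :
  a <= x1 <= x2 -> x2 <= b ->
  (h x1 <= x1 /\ x2 <= h x2) \/ (h x2 <= x1 /\ x2 <= h x1) ->
  forall c, x1 <= c <= x2 -> exists t, x1 <= t <= x2 /\ h t = c.
Proof.
  intros H1 H2 Hcov c Hc. apply cont_on_ivt; [lra|lra|unfold between; lra].
Qed.

End IntermediateValues.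

Lemma lt_id_below_least_fixed_point a b h v z z0 :
  cont_on a b h -> a <= v -> z <= b -> h v <= v ->
  is_min_of (fun x => v <= x <= z /\ h x = x) z0 ->
  forall x, v <= x < z0 -> h x < x.
Proof.
  intros Hh Hv Hz Hhv [[Hz0 _] z0_min] x Hx.
  destruct (Rlt_le_dec (h x) x) as [|Hxh]; [assumption|exfalso].
  destruct (cont_on_ivt a b (fun x => h x - x) (cont_on_sub_id a b h Hh) v x 0)
    as [t [Ht Htt]]; [lra|lra|unfold between; lra|].
  assert (z0 <= t) by (apply z0_min; split; lra). lra.
Qed.

Lemma iter_preimage_of_cover (g : R -> R) x1 x2 c t0 :
  (forall c, x1 <= c <= x2 -> exists t, x1 <= t <= x2 /\ g t = c) ->
  x1 <= t0 <= x2 -> g t0 = c ->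
  forall j, exists t, x1 <= t <= x2 /\ iter (S j) g t = c.
Proof.
  intros Hcov Ht0 Hgt0 j. induction j as [|j [t [Ht Htc]]]; [now exists t0|].
  destruct (Hcov t Ht) as [s [Hs Hst]]. exists s. split; [exact Hs|].
  unfold iter in *. now rewrite Nat.iter_succ_r, Hst.
Qed.

Section Iterates.

Variables (a b : R) (f : R -> R).
Hypotheses (cont_f : cont_on a b f) (maps_f : maps_into a b f).

Lemma maps_into_iter n : maps_into a b (iter n f).
Proof. induction n as [|n IHn]; intros x Hx; [exact Hx|]. apply maps_f, IHn, Hx. Qed.

Lemma cont_on_iter n : cont_on a b (iter n f).
Proof.
  induction n as [|n IHn]; intros x Hx eps Heps.
  - exists eps; split; [exact Heps|]. intros y _ Hxy. exact Hxy.
  - pose proof (maps_into_iter n x Hx) as Hnx.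
    destruct (cont_f _ Hnx eps Heps) as [d1 [Hd1 H1]].
    destruct (IHn x Hx d1 Hd1) as [d2 [Hd2 H2]].
    exists d2; split; [exact Hd2|]. intros y Hy Hxy.
    apply H1; [now apply maps_into_iter|now apply H2].
Qed.

End Iterates.

Section SecondIterate.

Variables (a b : R) (f : R -> R) (pm v z z0 d u0 : R).
Hypotheses (cont_f : cont_on a b f) (maps_f : maps_into a b f).
Hypotheses (a_le_pm : a <= pm) (pm_lt_v : pm < v) (z_le_b : z <= b).
Hypotheses (iter2_v : iter 2 f v = pm) (v_lt_f_v : v < f v).
Hypothesis least_z0 : is_min_of (fun x => v <= x <= z /\ iter 2 f x = x) z0.
Hypothesis greatest_d : is_max_of (fun x => pm <= x <= v /\ iter 2 f x = z0) d.
Hypothesis least_u0 : is_min_of (fun x => v <= x <= z0 /\ iter 2 f x = d) u0.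

Let cont_iter2 := cont_on_iter a b f cont_f maps_f 2.

Lemma v_lt_z0_le_z : v < z0 <= z.
Proof.
  destruct least_z0 as [[Hz0 Hgz0] _]. split; [|lra].
  destruct (Req_dec v z0) as [E|]; [|lra]. rewrite <- E in Hgz0. lra.
Qed.

Lemma iter2_lt_id x : v <= x < z0 -> iter 2 f x < x.
Proof.
  apply (lt_id_below_least_fixed_point a b (iter 2 f) v z);
    [exact cont_iter2|lra|lra|lra|exact least_z0].
Qed.

Lemma z0_le_f_z0 : z0 <= f z0.
Proof.
  destruct least_z0 as [[Hz0 _] z0_min]. pose proof v_lt_z0_le_z.
  destruct (Rle_lt_dec z0 (f z0)) as [|Hfz0]; [assumption|exfalso].
  destruct (cont_on_ivt a b (fun x => f x - x) (cont_on_sub_id a b f cont_f) v z0 0)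
    as [t [Ht Hft]]; [lra|lra|unfold between; lra|].
  assert (Hft' : f t = t) by lra.
  assert (z0 <= t) by (apply z0_min; split; [lra|unfold iter; simpl; now rewrite !Hft']).
  assert (t = z0) by lra. subst t. lra.
Qed.

Lemma z0_le_iter_z0 r : z0 <= iter r f z0.
Proof.
  destruct least_z0 as [[_ Hgz0] _]. pose proof z0_le_f_z0.
  enough (iter r f z0 = z0 \/ iter r f z0 = f z0) as [-> | ->] by lra.
  induction r as [|r [E|E]]; [now left| |]; change (iter (S r) f z0) with (f (iter r f z0));
    rewrite E; [now right|now left].
Qed.

Lemma iter_even_d i : iter (2 * i) f d = d \/ iter (2 * i) f d = z0.
Proof.
  destruct i as [|i]; [now left|right].
  destruct least_z0 as [[_ Hgz0] _], greatest_d as [[_ Hgd] _].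
  replace (2 * S i)%nat with (i * 2 + 2)%nat by lia.
  rewrite iter_add, Hgd. now apply iter_mul_fixed.
Qed.

Lemma f_d_outside : f d <= d \/ z0 <= f d.
Proof.
  destruct greatest_d as [[Hd Hgd] d_max]. pose proof v_lt_z0_le_z. pose proof z0_le_f_z0.
  assert (Hgfd : iter 2 f (f d) = f z0) by (rewrite <- Hgd; reflexivity).
  destruct (Rle_lt_dec (f d) d) as [|Hd_fd]; [now left|right].
  destruct (Rle_lt_dec z0 (f d)) as [|Hfd_z0]; [assumption|exfalso].
  destruct (Rle_lt_dec (f d) v) as [Hfd_v|Hv_fd].
  - (* g crosses z0 on [f d, v], against the maximality of d *)
    destruct (cont_on_ivt a b (iter 2 f) cont_iter2 (f d) v z0) as [t [Ht Hgt]];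
      [lra|lra|unfold between; lra|].
    assert (t <= d) by (apply d_max; split; [lra|exact Hgt]). lra.
  - pose proof (iter2_lt_id (f d) ltac:(lra)). lra.
Qed.

Lemma iter_odd_d r : iter (S (2 * r)) f d <= d \/ z0 <= iter (S (2 * r)) f d.
Proof.
  change (iter (S (2 * r)) f d) with (f (iter (2 * r) f d)).
  destruct (iter_even_d r) as [-> | ->]; [exact f_d_outside|right; exact z0_le_f_z0].
Qed.

Lemma d_le_v_le_u0_lt_z0 : d <= v <= u0 /\ u0 < z0.
Proof.
  destruct greatest_d as [[Hd _] _], least_u0 as [[Hu0 Hgu0] _], least_z0 as [[_ Hgz0] _].
  split; [lra|]. destruct (Req_dec u0 z0) as [E|]; [|lra].
  rewrite E in Hgu0. pose proof v_lt_z0_le_z. lra.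
Qed.

Lemma preimage_d_in_u0_z0 j : exists t, u0 <= t <= z0 /\ iter (2 * S j) f t = d.
Proof.
  destruct least_u0 as [[_ Hgu0] _], least_z0 as [[_ Hgz0] _], greatest_d as [[Hd _] _].
  pose proof v_lt_z0_le_z. pose proof d_le_v_le_u0_lt_z0.
  destruct (iter_preimage_of_cover (iter 2 f) u0 z0 d u0) with (j := j) as [t Ht];
    [apply (cont_on_cover a b); [exact cont_iter2|lra|lra|left; lra]|lra|exact Hgu0|].
  exists t. now rewrite iter_mul.
Qed.

Lemma preimage_d_in_d_v j : exists t, d <= t <= v /\ iter (2 * S j) f t = d.
Proof.
  destruct greatest_d as [[Hd Hgd] _]. pose proof v_lt_z0_le_z.
  assert (Hcov : forall c, d <= c <= v -> exists t, d <= t <= v /\ iter 2 f t = c).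
  { apply (cont_on_cover a b); [exact cont_iter2|lra|lra|right; lra]. }
  destruct (Hcov d ltac:(lra)) as [t0 [Ht0 Hgt0]].
  destruct (iter_preimage_of_cover (iter 2 f) d v d t0 Hcov Ht0 Hgt0 j) as [t Ht].
  exists t. now rewrite iter_mul.
Qed.

Lemma preimage_d_between p y j :
  v <= y <= u0 -> p <= d \/ z0 <= p ->
  exists t, between t p y /\ iter (2 * S j) f t = d.
Proof.
  intros Hy [Hp|Hp].
  - destruct (preimage_d_in_d_v j) as [t [Ht Htd]]. exists t; split; [left; lra|exact Htd].
  - destruct (preimage_d_in_u0_z0 j) as [t [Ht Htd]]. exists t; split; [right; lra|exact Htd].
Qed.

Lemma periodic_avoids_d x q M :
  v <= x <= u0 -> (0 < q)%nat -> iter q f x = x -> iter M f x <> d.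
Proof.
  intros Hx Hq Hxq HM. destruct greatest_d as [[_ Hgd] _].
  assert (HM2 : iter (2 + M) f x = z0) by (rewrite iter_add, HM; exact Hgd).
  pose proof (iter_periodic_return q (2 + M) f x Hq Hxq) as Hret. rewrite HM2 in Hret.
  pose proof (z0_le_iter_z0 ((2 + M) * q - (2 + M))). pose proof d_le_v_le_u0_lt_z0. lra.
Qed.

Lemma periodic_not_pinned y w q j :
  v <= y <= u0 -> v <= w <= u0 -> (0 < q)%nat -> iter q f y = y ->
  iter q f w <= d \/ z0 <= iter q f w ->
  (forall x, between x w y -> iter (2 * S j + q) f x = d -> x = y) -> False.
Proof.
  intros Hy Hw Hq Hyq Hqw pinned. pose proof v_lt_z0_le_z. pose proof d_le_v_le_u0_lt_z0.
  destruct (preimage_d_between (iter q f w) y j Hy Hqw) as [t [Ht Htd]].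
  rewrite <- Hyq in Ht.
  destruct (cont_on_ivt_between a b (iter q f) (cont_on_iter a b f cont_f maps_f q) w y t)
    as [x [Hx Hxt]]; [lra|lra|exact Ht|].
  assert (Hxd : iter (2 * S j + q) f x = d) by (rewrite iter_add, Hxt; exact Htd).
  rewrite (pinned x Hx Hxd) in Hxd. exact (periodic_avoids_d y q _ Hy Hq Hyq Hxd).
Qed.

Lemma long_odd_period_impossible (N k i q : nat) (w w2 w' y : R) :
  v <= w -> iter N f w = d -> w2 <= u0 ->
  is_min_of (fun x => w <= x <= w2 /\ iter (N + 2 * k) f x = d) w' ->
  w <= y <= w' -> (0 < q)%nat -> iter q f y = y ->
  q = (N + 2 * i)%nat -> (i < k)%nat -> False.
Proof.
  intros Hw HwN Hw2 [[Hw' _] w'_min] Hy Hq Hyq Eq Hik.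
  apply (periodic_not_pinned y w q (k - i - 1)); try lra; try assumption.
  - rewrite Eq, Nat.add_comm, iter_add, HwN.
    destruct (iter_even_d i) as [-> | ->]; lra.
  - intros x Hx Hxd. replace (2 * S (k - i - 1) + q)%nat with (N + 2 * k)%nat in Hxd by lia.
    assert (w' <= x) by (apply w'_min; split; [unfold between in Hx; lra|exact Hxd]).
    unfold between in Hx. lra.
Qed.

Lemma short_odd_period_impossible (N j q : nat) (w y : R) :
  is_max_of (fun x => v <= x <= u0 /\ iter N f x = d) w ->
  w <= y <= u0 -> (0 < q)%nat -> iter q f y = y -> Nat.Odd q ->
  N = (2 * S j + q)%nat -> False.
Proof.
  intros [[Hw _] w_max] Hy Hq Hyq [r Er] EN.
  pose proof v_lt_z0_le_z. pose proof d_le_v_le_u0_lt_z0.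
  destruct r as [|r].
  - assert (Hfy : f y = y) by (subst q; exact Hyq).
    pose proof (iter2_lt_id y ltac:(lra)) as Hgy. unfold iter in Hgy; simpl in Hgy.
    rewrite !Hfy in Hgy. lra.
  - destruct least_u0 as [[_ Hgu0] _].
    apply (periodic_not_pinned y u0 q j); try lra; try assumption.
    + replace q with (S (2 * r) + 2)%nat by lia. rewrite iter_add, Hgu0. apply iter_odd_d.
    + intros x Hx Hxd. rewrite <- EN in Hxd. unfold between in Hx.
      assert (x <= w) by (apply w_max; split; [lra|exact Hxd]). lra.
Qed.

Lemma odd_period_lower_bound (N k q : nat) (w w2 w' y : R) :
  Nat.Odd N ->
  is_max_of (fun x => v <= x <= u0 /\ iter N f x = d) w -> w2 <= u0 ->
  is_min_of (fun x => w <= x <= w2 /\ iter (N + 2 * k) f x = d) w' ->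
  w <= y <= w' -> least_period f q y -> Nat.Odd q -> (N + 2 * k <= q)%nat.
Proof.
  intros [n EN] Hw Hw2 Hw' Hy [Hq [Hyq _]] [r Er].
  destruct (le_lt_dec (N + 2 * k) q) as [|Hlt]; [assumption|exfalso].
  pose proof Hw as [[HwI HwN] _]. pose proof Hw' as [[Hw'I _] _].
  destruct (le_lt_dec N q).
  - apply (long_odd_period_impossible N k (r - n) q w w2 w' y);
      (lra || lia || assumption).
  - apply (short_odd_period_impossible N (n - r - 1) q w y);
      (lra || lia || assumption || now exists r).
Qed.

End SecondIterate.

Theorem lemma14
  (a b : R) (f : R -> R) (m : nat) (pm v z z0 d u0 : R)
  (mu' : nat -> R) (mu : nat -> nat -> R) :
  a <= b ->
  cont_on a b f ->
  maps_into a b f ->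
  Nat.Odd m -> (3 <= m)%nat ->
  (* P = orbit of pm, pm = min P, P of least period m in [a,b] *)
  a <= pm <= b ->
  least_period f m pm ->
  (forall i : nat, (i < m)%nat -> pm <= iter i f pm) ->
  (* e = f^(m-1)(min P) *)
  pm <= v < iter (m - 1) f pm ->
  f v = iter (m - 1) f pm ->
  v < z < iter (m - 1) f pm ->
  f z = z ->
  is_min_of (fun x => v <= x <= z /\ iter 2 f x = x) z0 ->
  is_max_of (fun x => pm <= x <= v /\ iter 2 f x = z0) d ->
  is_min_of (fun x => v <= x <= z0 /\ iter 2 f x = d) u0 ->
  (forall n : nat, (1 <= n)%nat ->
     is_max_of (fun x => v <= x <= u0 /\ iter (m + 2 * n) f x = d) (mu' n)) ->
  (forall n k : nat, (1 <= n)%nat -> (1 <= k)%nat ->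
     is_min_of (fun x => mu' n <= x <= mu' (S n) /\
                         iter (m + 2 * n + 2 * k) f x = d) (mu n k)) ->
  forall n k : nat, (1 <= n)%nat -> (1 <= k)%nat ->
  forall (y : R) (q : nat),
    mu' n <= y <= mu n k ->
    least_period f q y -> Nat.Odd q ->
    (m + 2 * n + 2 * k <= q)%nat.
Proof.
  intros _ Hc Hm Hodd Hm3 Hpm [_ [Hpmm Hpm_per]] _ Hv Hfv Hz _ Hz0 Hd Hu0 Hmu' Hmu
    n k Hn Hk y q Hy Hq Hqodd.
  set (e := iter (m - 1) f pm) in *.
  assert (Hfe : f e = pm).
  { unfold e. change (f (iter (m - 1) f pm)) with (iter (S (m - 1)) f pm).
    now replace (S (m - 1)) with m by lia. }
  assert (He : a <= e <= b) by now apply maps_into_iter.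
  assert (Hgv : iter 2 f v = pm) by (change (f (f v) = pm); now rewrite Hfv).
  assert (pm_lt_v : pm < v).
  { destruct (Req_dec pm v) as [E|]; [|lra].
    exfalso. apply (Hpm_per 2%nat); [lia|rewrite E at 1; exact Hgv]. }
  destruct (Hmu' (S n) ltac:(lia)) as [[Hw2 _] _].
  apply (odd_period_lower_bound a b f pm v z z0 d u0 Hc Hm) with (w := mu' n)
    (w2 := mu' (S n)) (w' := mu n k) (y := y); try lra; try assumption.
  - destruct Hodd as [r Er]. exists (r + n)%nat. lia.
  - now apply Hmu'.
  - now apply Hmu.
Qed.
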